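(* Let $\boldsymbol{X}$ be a covariate vector, let $Z$ be an instrument taking values in $\{0_a,1_a,0_b,1_b\}$, let $D(Z=z)\in\{0,1\}$ denote the potential treatment under $Z=z$, and let $Y(D=d)$, $d\in\{0,1\}$, denote the potential outcomes, all defined on a common probability space with distribution $P_0$. Assume the standing nested-monotonicity structure: $D(Z=1_a)-D(Z=0_a)\in\{0,1\}$ and $D(Z=1_b)-D(Z=0_b)\in\{0,1\}$ almost surely, and $D(Z=1_a)-D(Z=0_a)=1$ implies $D(Z=1_b)-D(Z=0_b)=1$. Let $S$ denote the principal stratum, where $\{S=\text{ACO}\}=\{D(Z=1_a)-D(Z=0_a)=1\}$ (always-compliers) and $\{S=\text{SW}\}=\{D(Z=1_b)-D(Z=0_b)=1,\ D(Z=1_a)-D(Z=0_a)=0\}$ (switchers), and assume $P_0(S=\text{ACO}\mid \boldsymbol{X})>0$ and $P_0(S=\text{SW}\mid\boldsymbol{X})>0$ almost surely. Define $\text{ATE}_{P_0}(\boldsymbol{x})=\mathbb{E}_{P_0}[Y(D=1)-Y(D=0)\mid \boldsymbol{X}=\boldsymbol{x}]$, $\text{ACOATE}_{P_0}(\boldsymbol{x})=\mathbb{E}_{P_0}[Y(D=1)-Y(D=0)\mid S=\text{ACO},\boldsymbol{X}=\boldsymbol{x}]$, $\text{SWATE}_{P_0}(\boldsymbol{x})=\mathbb{E}_{P_0}[Y(D=1)-Y(D=0)\mid S=\text{SW},\boldsymbol{X}=\boldsymbol{x}]$. Suppose one of the following holds: (i) (Principal ignorability) $\mathbb{E}_{P_0}[Y(D=d)\mid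 S=s,\boldsymbol{X}]=\mathbb{E}_{P_0}[Y(D=d)\mid \boldsymbol{X}]$ for $d\in\{0,1\}$ and every stratum value $s$; (ii) (No unmeasured common effect modifier) $\text{Cov}_{P_0}\big[(D(Z=1_a)-D(Z=0_a))(Y(D=1)-Y(D=0))\mid \boldsymbol{X}\big]=0$ and $\text{Cov}_{P_0}\big[(D(Z=1_b)-D(Z=0_b))(Y(D=1)-Y(D=0))\mid \boldsymbol{X}\big]=0$, where the covariance is understood as that between $D(Z=1_\cdot)-D(Z=0_\cdot)$ and $Y(D=1)-Y(D=0)$ conditional on $\boldsymbol{X}$. Then $\text{ATE}_{P_0}(\boldsymbol{x})=\text{ACOATE}_{P_0}(\boldsymbol{x})=\text{SWATE}_{P_0}(\boldsymbol{x})$.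
   Context: Nested instrumental variable design: two IV pairs $\{0_a,1_a\}$ and $\{0_b,1_b\}$, with compliers under pair $a$ (always-compliers, ACO) also being compliers under pair $b$; switchers (SW) comply under pair $b$ but not under pair $a$. *)

From HB Require Import structures.
From mathcomp Require Import all_boot all_order all_algebra.
From mathcomp Require Import all_classical all_reals all_analysis.
Set Implicit Arguments. Unset Strict Implicit. Unset Printing Implicit Defensive.
Import Order.TTheory GRing.Theory Num.Theory.
Local Open Scope classical_set_scope.
Local Open Scope ring_scope.

Inductive inst := z0a | z1a | z0b | z1b.

Inductive stratum := ACO | SW | OTHER.

Section defs.
Context {d d' : measure_display} {T : measurableType d} {T' : measurableType d'}.

(* h : T' -> R is a version of the conditional expectation E[f | X],
   i.e. h o X is sigma(X)-measurable, integrable, and has the same integral as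
   f over every event {X \in B}. *)
Definition cond_exp {R : realType} (P : probability T R) (X : T -> T') (f : T -> R)
    (h : T' -> R) : Prop :=
  [/\ measurable_fun setT h,
      P.-integrable setT (EFin \o (h \o X)) &
      forall B, measurable B ->
        (\int[P]_(w in X @^-1` B) (f w)%:E = \int[P]_(w in X @^-1` B) (h (X w))%:E)%E].

(* h is a version of x |-> E[f | A, X = x], defined as
   E[f 1_A | X = x] / P(A | X = x). *)
Definition cond_exp_given {R : realType} (P : probability T R) (X : T -> T') (A : set T)
    (f : T -> R) (h : T' -> R) : Prop :=
  exists pA m : T' -> R,
    [/\ cond_exp P X (\1_A) pA,
        cond_exp P X (fun w => f w * \1_A w) m &
        forall x, h x = m x / pA x].

Definition complyA (R : realType) (D : inst -> T -> bool) (w : T) : R :=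
  (D z1a w)%:R - (D z0a w)%:R.
Definition complyB (R : realType) (D : inst -> T -> bool) (w : T) : R :=
  (D z1b w)%:R - (D z0b w)%:R.

Definition stratum_event (R : realType) (D : inst -> T -> bool) (s : stratum) : set T :=
  match s with
  | ACO => [set w | complyA R D w = 1]
  | SW => [set w | complyB R D w = 1 /\ complyA R D w = 0]
  | OTHER => ~` ([set w | complyA R D w = 1] `|` [set w | complyB R D w = 1 /\ complyA R D w = 0])
  end.

Definition ite {R : realType} (Y : bool -> T -> R) (w : T) : R := Y true w - Y false w.

(* Conditional covariance Cov[U, V | X] = 0 a.s.:
   E[U V | X] = E[U | X] E[V | X] almost surely (for any versions). *)
Definition cond_uncorrelated {R : realType} (P : probability T R) (X : T -> T') (U V : T -> R)
  : Prop :=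
  forall hU hV hUV, cond_exp P X U hU -> cond_exp P X V hV ->
    cond_exp P X (fun w => U w * V w) hUV ->
    {ae P, forall w, hUV (X w) - hU (X w) * hV (X w) = 0}.

End defs.

From HB Require Import structures.
From mathcomp Require Import all_boot all_order all_algebra.
From mathcomp Require Import all_classical all_reals all_analysis.
From mathcomp Require Import measurable_realfun.
Import Order.TTheory GRing.Theory Num.Theory.
Local Open Scope classical_set_scope.
Local Open Scope ring_scope.

(* Write p_s = P(S = s | X), m_s = E[(Y(1) - Y(0)) 1_{S = s} | X] and
   ate = E[Y(1) - Y(0) | X]. The stratum-specific effects are m_s / p_s, so it
   suffices to show m_s = p_s ate almost surely for s = ACO and s = SW.
   Under (i) this holds for Y(1) and Y(0) separately, hence for their difference
   by linearity of conditional expectation. Under (ii), nested monotonicity gives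
   D(1_a) - D(0_a) = 1_{ACO} and D(1_b) - D(0_b) = 1_{ACO u SW} almost surely,
   so the two vanishing conditional covariances give m_ACO = p_ACO ate and,
   the strata being disjoint, m_ACO + m_SW = (p_ACO + p_SW) ate. *)

Section indicator.
Context {d : measure_display} {T : measurableType d} {R : realType}.

Lemma measurable_bool_natr (b : T -> bool) : measurable [set w | b w] ->
  measurable_fun setT (fun w => (b w)%:R : R).
Proof.
move=> mb; have -> : (fun w => (b w)%:R : R) = \1_[set w | b w].
  by apply/funext => w; rewrite indicE; case: (boolP (b w)) => bw;
    [rewrite mem_set | rewrite memNset //=; exact/negP].
exact: measurable_indic.
Qed.

Lemma indicU_disjoint (A B : set T) : A `&` B = set0 ->
  \1_(A `|` B) = \1_A \+ \1_B :> (T -> R).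
Proof.
move=> AB0; apply/funext => w; rewrite /= !indicE in_setU.
have [wA|wA] := boolP (w \in A); have [wB|wB] := boolP (w \in B);
  rewrite /= ?addr0 ?add0r //.
suff : (A `&` B) w by rewrite AB0.
by split; exact: set_mem.
Qed.

Lemma indic_01 (A : set T) (u : T -> R) w :
  (A w <-> u w = 1) -> u w = 0 \/ u w = 1 -> \1_A w = u w.
Proof.
move=> Au [u0|u1]; rewrite indicE.
- by rewrite memNset ?u0 // => /Au; rewrite u0 => /esym/eqP; rewrite oner_eq0.
- by rewrite mem_set ?u1 //; exact/Au.
Qed.

Lemma integrable_mul_indic {mu : {measure set T -> \bar R}} {A : set T}
    {f : T -> R} :
  measurable A -> mu.-integrable setT (EFin \o f) ->
  mu.-integrable setT (EFin \o (fun w => f w * \1_A w)).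
Proof.
move=> mA intf; apply: (le_integrable measurableT _ _ intf).
- apply/measurable_EFinP/measurable_funM; last exact: measurable_indic.
  exact/measurable_EFinP/(measurable_int _ intf).
- move=> w _ /=; rewrite lee_fin normrM indicE.
  by case: (_ \in _); rewrite ?normr1 ?mulr1 ?normr0 ?mulr0.
Qed.

End indicator.

Definition cond_mean_indep {d d' : measure_display} {T : measurableType d}
    {T' : measurableType d'} {R : realType} (P : probability T R) (X : T -> T')
    (A : set T) (f : T -> R) : Prop :=
  forall p m h : T' -> R, cond_exp P X (\1_A) p ->
    cond_exp P X (fun w => f w * \1_A w) m -> cond_exp P X f h ->
    {ae P, forall w, m (X w) = p (X w) * h (X w)}.

Section conditional_expectation.
Context {d d' : measure_display} {T : measurableType d} {T' : measurableType d'}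
  {R : realType} {P : probability T R} {X : T -> T'}.

Hypothesis mX : measurable_fun setT X.

Let measurable_preimage {B} : measurable B -> measurable (X @^-1` B).
Proof. by move=> mB; rewrite -[X in measurable X]setTI; exact: mX. Qed.

Let PX := distribution P (MeasurableFun.Pack (MeasurableFun.Class
  (isMeasurableFun.Build _ _ _ _ X mX))).

Let ae_distribution (Q : T' -> Prop) :
  {ae PX, forall y, Q y} -> {ae P, forall w, Q (X w)}.
Proof.
case=> N [mN PXN0 QN]; exists (X @^-1` N); split => //.
  exact: measurable_preimage.
by move=> w /= nQ; apply: QN.
Qed.

Let integrable_distributionE {h : T' -> R} : measurable_fun setT h ->
  PX.-integrable setT (EFin \o h) <-> P.-integrable setT (EFin \o (h \o X)).
Proof.
move=> mh; split => [/integrableP [_ ih] | ihX].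
  apply/integrableP; split; first exact/measurable_EFinP/measurableT_comp.
  move: ih; rewrite ge0_integral_pushforward //=.
  exact/measurable_EFinP/measurableT_comp.
apply: (@integrable_pushforward _ _ _ _ _ X mX P setT) => //.
exact/measurable_EFinP.
Qed.

Let integral_distribution {h : T' -> R} {B} : measurable_fun setT h ->
  P.-integrable setT (EFin \o (h \o X)) -> measurable B ->
  (\int[PX]_(y in B) (h y)%:E = \int[P]_(w in X @^-1` B) (h (X w))%:E)%E.
Proof.
move=> mh ih mB; rewrite integral_pushforward //; first exact/measurable_EFinP.
by apply: integrableS ih => //; exact: measurable_preimage.
Qed.

Lemma cond_exp_unique {f : T -> R} {h1 h2 : T' -> R} :
  cond_exp P X f h1 -> cond_exp P X f h2 -> {ae P, forall w, h1 (X w) = h2 (X w)}.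
Proof.
case=> mh1 ih1 eh1 [mh2 ih2 eh2].
have [|N [mN PXN0 eqN]] := @integral_ae_eq _ _ _ PX setT measurableT
  (EFin \o h2) (EFin \o h1) (proj2 (integrable_distributionE mh1) ih1)
  (proj2 (measurable_EFinP _ _) mh2).
  by move=> B _ mB; rewrite !integral_distribution // -eh1 // -eh2.
apply: (ae_distribution (fun y => h1 y = h2 y)); exists N; split => // y /= neq.
by apply: eqN => /= /(_ I) [].
Qed.

Let charge_of {f : T -> R} (intf : P.-integrable setT (EFin \o f)) :
  {charge set T' -> \bar R}.
Proof. refine (pushforward (induced_charge intf) X); exact: mX. Defined.

Let charge_of_dominated {f : T -> R} (intf : P.-integrable setT (EFin \o f)) :
  charge_of intf `<< (PX : {sigma_finite_measure set T' -> \bar R}).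
Proof.
apply/null_content_dominatesP => B mB PXB0.
apply: null_set_integral => //; first exact: measurable_preimage.
exact/measurable_funTS/(measurable_int _ intf).
Qed.

Lemma cond_exp_exists {f : T -> R} : P.-integrable setT (EFin \o f) ->
  exists h, cond_exp P X f h.
Proof.
move=> intf; have dom := charge_of_dominated intf.
(* E[f | X] is the density, with respect to the law of X, of the image under X
   of the signed measure f dP. *)
pose g := Radon_Nikodym (charge_of intf)
  (PX : {sigma_finite_measure set T' -> \bar R}).
have gK : EFin \o (fine \o g) = g.
  by apply/funext => y /=; rewrite fineK // Radon_Nikodym_fin_num.
have intg : PX.-integrable setT g := Radon_Nikodym_integrable dom.
have mh : measurable_fun setT (fine \o g).
  by apply/measurable_EFinP; rewrite gK; exact: measurable_int intg.
have ih : P.-integrable setT (EFin \o ((fine \o g) \o X)).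
  by apply/(integrable_distributionE mh); rewrite gK.
exists (fine \o g); split => // B mB.
rewrite -[LHS]/(charge_of intf B) (Radon_Nikodym_integral dom mB).
rewrite -integral_distribution //.
by apply: eq_integral => y _; rewrite /= fineK // Radon_Nikodym_fin_num.
Qed.

Let integrableS_preimage (u : T -> \bar R) B : measurable B ->
  P.-integrable setT u -> P.-integrable (X @^-1` B) u.
Proof. by move=> mB; apply: integrableS => //; exact: measurable_preimage. Qed.

Lemma cond_exp_add {f g : T -> R} {hf hg : T' -> R} :
  P.-integrable setT (EFin \o f) -> P.-integrable setT (EFin \o g) ->
  cond_exp P X f hf -> cond_exp P X g hg ->
  cond_exp P X (f \+ g) (hf \+ hg).
Proof.
move=> intf intg [mhf ihf ehf] [mhg ihg ehg]; split.
- exact: measurable_funD.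
- apply: (eq_integrable measurableT _ _ _ (integrableD measurableT ihf ihg)).
  by move=> w _; rewrite /= EFinD.
- move=> B mB; have mXB := measurable_preimage mB.
  under eq_integral do rewrite EFinD.
  rewrite (integralD_EFin mXB) ?integrableS_preimage // ehf // ehg //.
  under [RHS]eq_integral do rewrite EFinD.
  by rewrite (integralD_EFin mXB) ?integrableS_preimage.
Qed.

Lemma cond_exp_sub {f g : T -> R} {hf hg : T' -> R} :
  P.-integrable setT (EFin \o f) -> P.-integrable setT (EFin \o g) ->
  cond_exp P X f hf -> cond_exp P X g hg ->
  cond_exp P X (f \- g) (hf \- hg).
Proof.
move=> intf intg [mhf ihf ehf] [mhg ihg ehg]; split.
- exact: measurable_funB.
- apply: (eq_integrable measurableT _ _ _ (integrableB measurableT ihf ihg)).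
  by move=> w _; rewrite /= EFinB.
- move=> B mB; have mXB := measurable_preimage mB.
  under eq_integral do rewrite EFinB.
  rewrite (integralB_EFin mXB) ?integrableS_preimage // ehf // ehg //.
  under [RHS]eq_integral do rewrite EFinB.
  by rewrite (integralB_EFin mXB) ?integrableS_preimage.
Qed.

Lemma cond_exp_congr_ae {f g : T -> R} {h : T' -> R} :
  measurable_fun setT f -> measurable_fun setT g ->
  {ae P, forall w, f w = g w} -> cond_exp P X f h -> cond_exp P X g h.
Proof.
move=> mf mg fg [mh ih eh]; split => // B mB; rewrite -eh //.
apply: ae_eq_integral => //; first exact: measurable_preimage.
- exact/measurable_EFinP/measurable_funTS.
- exact/measurable_EFinP/measurable_funTS.
- by apply: filterS fg => w /= ->.
Qed.

Lemma cond_exp_given_of_mean_indep {A : set T} {f : T -> R} {h k : T' -> R} :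
  cond_mean_indep P X A f ->
  (forall p, cond_exp P X (\1_A) p -> {ae P, forall w, 0 < p (X w)}) ->
  cond_exp P X f h -> cond_exp_given P X A f k ->
  {ae P, forall w, k (X w) = h (X w)}.
Proof.
move=> indep pos ch [p [m [cp cm kE]]].
apply: filterS2 (indep p m h cp cm ch) (pos p cp) => w mE p0.
by rewrite kE mE mulrC mulKf // gt_eqF.
Qed.

Lemma cond_mean_indep_of_cond_exp_given {A : set T} {f : T -> R} :
  (forall p, cond_exp P X (\1_A) p -> {ae P, forall w, 0 < p (X w)}) ->
  (forall p k h, cond_exp P X (\1_A) p -> cond_exp_given P X A f k ->
     cond_exp P X f h -> {ae P, forall w, 0 < p (X w) -> k (X w) = h (X w)}) ->
  cond_mean_indep P X A f.
Proof.
move=> pos given p m h cp cm ch.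
have cg : cond_exp_given P X A f (fun y => m y / p y) by exists p, m.
apply: filterS2 (given p _ h cp cg ch) (pos p cp) => w kE p0.
by rewrite -(kE p0) mulrC divfK // gt_eqF.
Qed.

Lemma cond_mean_indep_of_uncorrelated {A : set T} {U V : T -> R} :
  measurable A -> measurable_fun setT U -> measurable_fun setT V ->
  {ae P, forall w, \1_A w = U w} -> cond_uncorrelated P X U V ->
  cond_mean_indep P X A V.
Proof.
move=> mA mU mV AU uncorr p m h cp cm ch.
have mAf : measurable_fun setT (\1_A : T -> R) by exact: measurable_indic.
have cU : cond_exp P X U p by exact: cond_exp_congr_ae cp.
have cUV : cond_exp P X (fun w => U w * V w) m.
  apply: cond_exp_congr_ae cm; [exact: measurable_funM.. |].
  by apply: filterS AU => w <-; rewrite mulrC.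
by apply: filterS (uncorr p h m cU ch cUV) => w /eqP; rewrite subr_eq0 => /eqP.
Qed.

Lemma cond_mean_indepB {A : set T} {f g : T -> R} :
  measurable A -> P.-integrable setT (EFin \o f) ->
  P.-integrable setT (EFin \o g) ->
  cond_mean_indep P X A f -> cond_mean_indep P X A g ->
  cond_mean_indep P X A (f \- g).
Proof.
move=> mA intf intg indepf indepg p m h cp cm ch.
have [hf chf] := cond_exp_exists intf.
have [hg chg] := cond_exp_exists intg.
have [mf cmf] := cond_exp_exists (integrable_mul_indic mA intf).
have [mg cmg] := cond_exp_exists (integrable_mul_indic mA intg).
have cmfg : cond_exp P X (fun w => (f \- g) w * \1_A w) (mf \- mg).
  have -> : (fun w => (f \- g) w * \1_A w) =
            (fun w => f w * \1_A w) \- (fun w => g w * \1_A w).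
    by apply/funext => w; rewrite /= mulrBl.
  exact: cond_exp_sub (integrable_mul_indic mA intf)
    (integrable_mul_indic mA intg) cmf cmg.
have e1 : {ae P, forall w, m (X w) = p (X w) * (hf (X w) - hg (X w))}.
  apply: filterS3 (cond_exp_unique cm cmfg) (indepf p mf hf cp cmf chf)
    (indepg p mg hg cp cmg chg) => w /= -> -> ->.
  by rewrite mulrBr.
by apply: filterS2 e1 (cond_exp_unique ch (cond_exp_sub intf intg chf chg))
  => w -> ->.
Qed.

Lemma cond_mean_indep_setU_cancel {A B : set T} {f : T -> R} :
  measurable A -> measurable B -> A `&` B = set0 ->
  P.-integrable setT (EFin \o f) ->
  cond_mean_indep P X (A `|` B) f -> cond_mean_indep P X A f ->
  cond_mean_indep P X B f.
Proof.
move=> mA mB AB0 intf indepAB indepA p m h cp cm ch.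
have [q cq] := cond_exp_exists (integrable_indic P mA).
have [n cn] := cond_exp_exists (integrable_mul_indic mA intf).
have cqp : cond_exp P X (\1_(A `|` B)) (q \+ p).
  rewrite indicU_disjoint //.
  exact: cond_exp_add (integrable_indic P mA) (integrable_indic P mB) cq cp.
have cnm : cond_exp P X (fun w => f w * \1_(A `|` B) w) (n \+ m).
  have -> : (fun w => f w * \1_(A `|` B) w) =
            (fun w => f w * \1_A w) \+ (fun w => f w * \1_B w).
    by apply/funext => w; rewrite indicU_disjoint //= mulrDr.
  exact: cond_exp_add (integrable_mul_indic mA intf)
    (integrable_mul_indic mB intf) cn cm.
apply: filterS2 (indepAB _ _ h cqp cnm ch) (indepA _ _ h cq cn ch) => w eAB eA.
by move: eAB; rewrite /= eA mulrDl => /addrI.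
Qed.

End conditional_expectation.

Section nested_monotonicity.
Context {d : measure_display} {T : measurableType d} {R : realType}
  {P : probability T R} {D : inst -> T -> bool}.

Lemma ACO_SW_disjoint : stratum_event R D ACO `&` stratum_event R D SW = set0.
Proof.
apply/seteqP; split => // w /= [a1 [_ a0]].
by move: a1; rewrite a0 => /esym/eqP; rewrite oner_eq0.
Qed.

Lemma indic_ACO : {ae P, forall w, complyA R D w = 0 \/ complyA R D w = 1} ->
  {ae P, forall w, \1_(stratum_event R D ACO) w = complyA R D w}.
Proof. by apply: filterS => w; apply: indic_01. Qed.

Lemma indic_ACO_SW :
  {ae P, forall w, complyA R D w = 0 \/ complyA R D w = 1} ->
  {ae P, forall w, complyB R D w = 0 \/ complyB R D w = 1} ->
  {ae P, forall w, complyA R D w = 1 -> complyB R D w = 1} ->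
  {ae P, forall w,
    \1_(stratum_event R D ACO `|` stratum_event R D SW) w = complyB R D w}.
Proof.
move=> monA monB nest; apply: filterS3 monA monB nest => w a01 b01 ab.
apply: indic_01 b01; split => [[/ab | []] // | b1].
by case: a01 => a; [right; split | left].
Qed.

Hypothesis mD : forall z, measurable [set w | D z w].

Lemma measurable_complyA : measurable_fun setT (complyA R D).
Proof. by apply: measurable_funB; apply: measurable_bool_natr. Qed.

Lemma measurable_complyB : measurable_fun setT (complyB R D).
Proof. by apply: measurable_funB; apply: measurable_bool_natr. Qed.

Lemma measurable_stratum_event s : measurable (stratum_event R D s).
Proof.
have level (u : T -> R) c : measurable_fun setT u -> measurable [set w | u w = c].
  by move=> mu; rewrite -[X in measurable X]setTI; exact: mu (measurable_set1 c).
have mACO := level _ 1 measurable_complyA.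
have mSW := measurableI _ _ (level _ 1 measurable_complyB)
  (level _ 0 measurable_complyA).
by case: s => //=; exact/measurableC/measurableU.
Qed.

End nested_monotonicity.

Theorem mainTheorem1
  (d d' : measure_display) (T : measurableType d) (T' : measurableType d')
  (R : realType) (P : probability T R)
  (X : T -> T') (D : inst -> T -> bool) (Y : bool -> T -> R)
  (mX : measurable_fun setT X)
  (mD : forall z, measurable [set w | D z w])
  (iY : forall b, P.-integrable setT (EFin \o Y b))
  (* nested monotonicity *)
  (monA : {ae P, forall w, complyA R D w = 0 \/ complyA R D w = 1})
  (monB : {ae P, forall w, complyB R D w = 0 \/ complyB R D w = 1})
  (nest : {ae P, forall w, complyA R D w = 1 -> complyB R D w = 1})
  (* positivity of P(S = ACO | X) and P(S = SW | X) *)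
  (posACO : forall p, cond_exp P X (\1_(stratum_event R D ACO)) p ->
     {ae P, forall w, 0 < p (X w)})
  (posSW : forall p, cond_exp P X (\1_(stratum_event R D SW)) p ->
     {ae P, forall w, 0 < p (X w)})
  (assum :
     (* (i) principal ignorability *)
     (forall (b : bool) (s : stratum) (ps hs hy : T' -> R),
        cond_exp P X (\1_(stratum_event R D s)) ps ->
        cond_exp_given P X (stratum_event R D s) (Y b) hs ->
        cond_exp P X (Y b) hy ->
        {ae P, forall w, 0 < ps (X w) -> hs (X w) = hy (X w)})
     \/
     (* (ii) no unmeasured common effect modifier *)
     (cond_uncorrelated P X (complyA R D) (ite Y) /\
      cond_uncorrelated P X (complyB R D) (ite Y))) :
  forall ate acoate swate : T' -> R,
    cond_exp P X (ite Y) ate ->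
    cond_exp_given P X (stratum_event R D ACO) (ite Y) acoate ->
    cond_exp_given P X (stratum_event R D SW) (ite Y) swate ->
    {ae P, forall w, ate (X w) = acoate (X w) /\ acoate (X w) = swate (X w)}.
Proof.
move=> ate acoate swate cate cACO cSW.
have mS s : measurable (stratum_event R D s) := measurable_stratum_event mD s.
have iite : P.-integrable setT (EFin \o ite Y).
  apply: (eq_integrable measurableT _ _ _
    (integrableB measurableT (iY true) (iY false))).
  by move=> w _; rewrite /= EFinB.
have [indepACO indepSW] : cond_mean_indep P X (stratum_event R D ACO) (ite Y) /\
                          cond_mean_indep P X (stratum_event R D SW) (ite Y).
  case: assum => [ignorable | [uncorrA uncorrB]].
    by split; apply: cond_mean_indepB => //;
      apply: cond_mean_indep_of_cond_exp_given => //; exact: ignorable.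
  have mite : measurable_fun setT (ite Y).
    exact/measurable_EFinP/(measurable_int _ iite).
  have indepACO := cond_mean_indep_of_uncorrelated mX (mS ACO)
    (measurable_complyA mD) mite (indic_ACO monA) uncorrA.
  have indepACO_SW := cond_mean_indep_of_uncorrelated mX
    (measurableU _ _ (mS ACO) (mS SW)) (measurable_complyB mD) mite
    (indic_ACO_SW monA monB nest) uncorrB.
  split => //; exact: (cond_mean_indep_setU_cancel mX (mS ACO) (mS SW)
    ACO_SW_disjoint iite indepACO_SW indepACO).
have eACO := cond_exp_given_of_mean_indep indepACO posACO cate cACO.
have eSW := cond_exp_given_of_mean_indep indepSW posSW cate cSW.
by apply: filterS2 eACO eSW => w -> ->.
Qed.
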